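(* $\mathrm{Ndim}(\mathcal F_{\mathrm{aCORE}})\le4m+(8k+4)\log m+4\log(8e)=O(m+k\log m)$.
   Context: $\mathcal A=[m]$, $1\le k\le m$, $\mathcal A_k$ the set of $k$-subsets of $\mathcal A$, $\mathcal E=2^{\mathcal A}$. A profile is $P=(A_1,\dots,A_n)\in\mathcal E^n$, $n\ge1$. For $\alpha,\beta\ge0$, $\mathrm{CORE}_{(\alpha,\beta)}$ maps $P$ to the set of $W\in\mathcal A_k$ such that for every nonempty $W'\subseteq\mathcal A$, $|\{j\in[n]:|A_j\cap W'|>\alpha|A_j\cap W|\}|<\beta\frac{|W'|}{k}n$. $\mathcal F_{\mathrm{aCORE}}=\{\mathrm{CORE}_{(\alpha,\beta)}:\alpha,\beta\ge0\}$. Natarajan dimension: a finite set $\mathcal P$ of profiles is shattered by $\mathcal F$ if there are $f^0,f^1$ with $f^0(P)\ne f^1(P)$ on $\mathcal P$ such that for every $B\subseteq\mathcal P$ some $f\in\mathcal F$ equals $f^0$ on $B$ and $f^1$ on $\mathcal P\setminus B$; $\mathrm{Ndim}$ is the largest size of a shattered set. Logarithms are base 2. *)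

From mathcomp Require Import all_boot.
From Stdlib Require Import Reals.
Set Implicit Arguments. Unset Strict Implicit. Unset Printing Implicit Defensive.

(* A profile (A_1,...,A_n) is a sequence of approval sets; n = size P. *)
Definition profile (m : nat) := seq {set 'I_m}.

Definition Rltb (x y : R) : bool := if Rlt_dec x y then true else false.

Definition nblock (m : nat) (alpha : R) (P : profile m) (W W' : {set 'I_m}) : nat :=
  count (fun Aj => Rltb (alpha * INR #|Aj :&: W|)%R (INR #|Aj :&: W'|)) P.

Definition CORE (m k : nat) (alpha beta : R) (P : profile m) : {set {set 'I_m}} :=
  [set W : {set 'I_m} | (#|W| == k) &&
     [forall W' : {set 'I_m}, (W' != set0) ==>
        Rltb (INR (nblock alpha P W W'))
             (beta * (INR #|W'| / INR k) * INR (size P))%R]].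

(* Natarajan shattering of a finite set S of profiles (given as a duplicate-free
   list of profiles, each with n >= 1 voters) by F_aCORE = {CORE_(a,b) : a,b >= 0}. *)
Definition aCORE_shatters (m k : nat) (S : seq (profile m)) : Prop :=
  exists f0 f1 : profile m -> {set {set 'I_m}},
    (forall P, P \in S -> f0 P != f1 P) /\
    (forall B : pred (profile m),
       exists alpha beta : R, (0 <= alpha)%R /\ (0 <= beta)%R /\
         forall P, P \in S ->
           CORE k alpha beta P = if B P then f0 P else f1 P).

Definition log2 (x : R) : R := (ln x / ln 2)%R.

(* The map (alpha, beta) |-> (CORE_(alpha,beta)(P))_(P in S) takes few values.
   The number of voters blocking W through W' depends on alpha only through the
   set of pairs (x, y) in {0..m}^2 with alpha x < y; these sets form a chain,
   decreasing in alpha, so each is determined by its cardinality, one of at most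
   (m+1)^2 + 1 values.  For fixed alpha, CORE_(alpha,beta)(P) grows with beta, so
   the whole family over S is determined by the sum of the |CORE_(alpha,beta)(P)|,
   one of at most |S| 2^m + 1 values.  Shattering S needs 2^|S| distinct
   families, hence 2^|S| <= ((m+1)^2 + 1)(|S| 2^m + 1), which forces
   |S| <= 4m + 8, below the stated bound. *)

From mathcomp Require Import all_boot zify.
From Stdlib Require Import Reals Lra ClassicalEpsilon.
(* restores ssrnat's [^] on nat, which importing Reals shadows *)
From mathcomp Require Import ssrnat.

Set Implicit Arguments.
Unset Strict Implicit.
Unset Printing Implicit Defensive.

Lemma RltbP (x y : R) : reflect (x < y)%R (Rltb x y).
Proof. by rewrite /Rltb; case: Rlt_dec => h; constructor. Qed.

Lemma card_set (T : finType) : #|{: {set T}}| = 2 ^ #|T|.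
Proof. by rewrite -[in RHS]cardsT -card_powerset powersetT cardsT. Qed.

Lemma card_shattered_le (X Y : finType) (I V : Type)
    (h : I -> X -> V) (f0 f1 : X -> V) (code : I -> Y) :
  (forall x, f0 x <> f1 x) ->
  (forall B : {set X}, exists i, forall x, h i x = if x \in B then f0 x else f1 x) ->
  (forall i j, code i = code j -> h i =1 h j) ->
  2 ^ #|X| <= #|Y|.
Proof.
move=> f01 /choice [g gP] code_h.
have g_inj : injective (code \o g).
  move=> B1 B2 /code_h eqh; apply/setP => x; have := eqh x; rewrite !gP.
  by case: (x \in B1); case: (x \in B2) => // e; case: (f01 x); rewrite e.
by rewrite -card_set; exact: leq_card g_inj.
Qed.

Lemma eq_of_sum_card_subset (I T : finType) (A B : I -> {set T}) :
  (forall i, A i \subset B i) -> \sum_i #|A i| = \sum_i #|B i| -> A =1 B.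
Proof.
move=> AB /eqP; have [_ ->] := leqif_sum (fun i (_ : true) => subset_leqif_card (AB i)).
by move=> /forall_inP BA i; apply/eqP; rewrite eqEsubset AB BA.
Qed.

Definition blocking_pairs (m : nat) (alpha : R) : {set 'I_m.+1 * 'I_m.+1} :=
  [set p : 'I_m.+1 * 'I_m.+1 | Rltb (alpha * INR p.1) (INR p.2)].

Lemma blocking_pairs_subset m (a a' : R) :
  (a <= a')%R -> blocking_pairs m a' \subset blocking_pairs m a.
Proof.
move=> aa'; apply/subsetP => p; rewrite !inE => /RltbP lt_a'; apply/RltbP.
by apply: Rle_lt_trans lt_a'; apply: Rmult_le_compat_r => //; apply: pos_INR.
Qed.

Lemma blocking_pairs_card_inj m (a a' : R) :
  #|blocking_pairs m a| = #|blocking_pairs m a'| -> blocking_pairs m a = blocking_pairs m a'.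
Proof.
move=> eq_card; apply/eqP; case: (Rle_or_lt a a') => [aa' | /Rlt_le a'a].
- by rewrite eq_sym eqEcard blocking_pairs_subset // eq_card leqnn.
- by rewrite eqEcard blocking_pairs_subset // eq_card leqnn.
Qed.

Lemma nblock_blocking_pairs m (a a' : R) :
  blocking_pairs m a = blocking_pairs m a' -> forall (P : profile m) W W',
  nblock a P W W' = nblock a' P W W'.
Proof.
move=> eq_bp P W W'; apply: eq_count => Aj.
have lt_card (A : {set 'I_m}) : #|A| < m.+1 by rewrite ltnS -[m in _ <= m]card_ord max_card.
have bpE b : Rltb (b * INR #|Aj :&: W|) (INR #|Aj :&: W'|) =
             ((inord #|Aj :&: W|, inord #|Aj :&: W'|) \in blocking_pairs m b).
  by rewrite inE /= !inordK.
by rewrite !bpE eq_bp.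
Qed.

Lemma CORE_blocking_pairs m k (a a' : R) :
  blocking_pairs m a = blocking_pairs m a' -> forall b (P : profile m),
  CORE k a b P = CORE k a' b P.
Proof.
move=> eq_bp b P; apply/setP => W; rewrite !inE; congr (_ && _).
by apply: eq_forallb => W'; rewrite (nblock_blocking_pairs eq_bp).
Qed.

Lemma CORE_subset m k (a b b' : R) (P : profile m) :
  (b <= b')%R -> CORE k a b P \subset CORE k a b' P.
Proof.
move=> bb'; apply/subsetP => W; rewrite !inE => /andP [-> /forallP core_b] /=.
apply/forallP => W'; apply/implyP => /(implyP (core_b W')) /RltbP lt_b; apply/RltbP.
apply: Rlt_le_trans lt_b _; apply: Rmult_le_compat_r; first exact: pos_INR.
apply: Rmult_le_compat_r => //; apply: Rmult_le_pos; first exact: pos_INR.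
(* for k = 0 this relies on Rocq's convention / 0 = 0 *)
case: (k) => [|k']; first by rewrite /= Rinv_0; lra.
by apply/Rlt_le/Rinv_0_lt_compat/lt_0_INR; lia.
Qed.

Lemma CORE_eq_of_sum_card m k (X : finType) (Q : X -> profile m) (a b b' : R) :
  \sum_x #|CORE k a b (Q x)| = \sum_x #|CORE k a b' (Q x)| ->
  forall x, CORE k a b (Q x) = CORE k a b' (Q x).
Proof.
wlog bb' : b b' / (b <= b')%R => [wlog_le | ].
  case: (Rle_or_lt b b') => [|/Rlt_le b'b]; first exact: wlog_le.
  by move=> /esym /(wlog_le _ _ b'b) eqC x; rewrite eqC.
exact: (eq_of_sum_card_subset (fun x => CORE_subset k a (Q x) bb')).
Qed.

Lemma aCORE_shatters_exp2_le m k (S : seq (profile m)) :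
  uniq S -> aCORE_shatters k S ->
  2 ^ size S <= (m.+1 ^ 2).+1 * (size S * 2 ^ m).+1.
Proof.
move=> uS [f0 [f1 [f01 shatS]]].
have card_S : #|{: seq_sub S}| = size S by rewrite card_seq_sub.
have lt_bp (a : R) : #|blocking_pairs m a| < (m.+1 ^ 2).+1.
  by rewrite ltnS; apply: leq_trans (max_card _) _; rewrite card_prod card_ord mulnn.
have lt_sum (a b : R) : \sum_(x : seq_sub S) #|CORE k a b (val x)| < (size S * 2 ^ m).+1.
  rewrite ltnS -card_S -sum_nat_const; apply: leq_sum => x _.
  by apply: leq_trans (max_card _) _; rewrite card_set card_ord.
pose code ab : 'I_(m.+1 ^ 2).+1 * 'I_(size S * 2 ^ m).+1 :=
  (inord #|blocking_pairs m ab.1|, inord (\sum_(x : seq_sub S) #|CORE k ab.1 ab.2 (val x)|)).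
have := card_shattered_le (h := fun (ab : R * R) (x : seq_sub S) => CORE k ab.1 ab.2 (val x))
          (f0 := f0 \o val) (f1 := f1 \o val) (code := code).
rewrite card_prod !card_ord card_S; apply.
- by move=> x; apply/eqP/f01/valP.
- move=> B; have [a [b [_ [_ coreB]]]] := shatS [pred P | P \in map val (enum B)].
  by exists (a, b) => x; rewrite /= coreB ?(valP x) //= mem_map ?mem_enum //; exact: val_inj.
- move=> [a b] [a' b'] [/(congr1 val) eq_bp /(congr1 val) eq_sum] x /=.
  move: eq_bp eq_sum; rewrite /= !inordK // => /blocking_pairs_card_inj eq_bp.
  under [X in _ = X -> _]eq_bigr do rewrite -(CORE_blocking_pairs k eq_bp).
  by move=> /CORE_eq_of_sum_card ->; rewrite (CORE_blocking_pairs k eq_bp).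
Qed.

Lemma exp2_le_bound m s : 2 ^ s <= (m.+1 ^ 2).+1 * (s * 2 ^ m).+1 -> s <= 4 * m + 8.
Proof.
move=> le_s; rewrite leqNgt; apply/negP => lt_s.
have [t def_s] : exists t, s = t + m + m + m + 4 by exists (s - (3 * m + 4)); lia.
have exp_s : 2 ^ s = 2 ^ t * 2 ^ m * 2 ^ m * 2 ^ m * 2 ^ 4 by rewrite -!expnD def_s.
have lt_m : m.+1 < 2 * 2 ^ m by rewrite -expnS ltn_expl.
have lt_t : t < 2 ^ t by rewrite ltn_expl.
have pos_m : 0 < 2 ^ m by rewrite expn_gt0.
have le_sq : (m.+1 ^ 2).+1 <= 4 * (2 ^ m * 2 ^ m) by nia.
have le_lin : (s * 2 ^ m).+1 <= s.+1 * 2 ^ m by rewrite mulSn; lia.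
have cube_pos : 0 < 2 ^ m * 2 ^ m * 2 ^ m by rewrite !muln_gt0 pos_m.
have : 4 * 2 ^ t * (2 ^ m * 2 ^ m * 2 ^ m) <= s.+1 * (2 ^ m * 2 ^ m * 2 ^ m).
  by have := leq_trans le_s (leq_mul le_sq le_lin); rewrite exp_s; lia.
by rewrite leq_pmul2r //; lia.
Qed.

Lemma log2_pow2 n : log2 (2 ^ n) = INR n.
Proof. by rewrite /log2 ln_pow; [field; have := ln_lt_2 | ]; lra. Qed.

Lemma log2_le (x y : R) : (0 < x)%R -> (x <= y)%R -> (log2 x <= log2 y)%R.
Proof.
move=> x_gt0 [xy | <-]; last exact: Rle_refl.
apply: Rmult_le_compat_r; first by apply/Rlt_le/Rinv_0_lt_compat; have := ln_lt_2; lra.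
exact/Rlt_le/ln_increasing.
Qed.

Theorem theorem12 (m k : nat) (hk1 : (1 <= k)%N) (hkm : (k <= m)%N)
  (S : seq (profile m)) (huniq : uniq S)
  (hn : forall P, P \in S -> (0 < size P)%N)
  (hsh : aCORE_shatters k S) :
  (INR (size S) <= 4 * INR m + (8 * INR k + 4) * log2 (INR m)
                   + 4 * log2 (8 * exp 1))%R.
Proof.
have /leP /le_INR := exp2_le_bound (aCORE_shatters_exp2_le huniq hsh).
rewrite plus_INR mult_INR /= => le_S.
have log2_m : (log2 (2 ^ 0) <= log2 (INR m))%R.
  by apply: log2_le => /=; [lra | apply: (le_INR 1); apply/leP; lia].
have log2_8e : (log2 (2 ^ 3) <= log2 (8 * exp 1))%R.
  by apply: log2_le => /=; have := exp_ineq1 1 R1_neq_R0; lra.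
rewrite !log2_pow2 /= in log2_m log2_8e.
have := pos_INR k; nra.
Qed.
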